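(* Let $n\geq 2$ and let $P$ be a set of $n$ points equally spaced on a circle. There is a tree spanner on $P$ with dilation at most $\frac{2n}{\pi}+\frac{\pi}{2n}$.
   Context: A tree spanner on $P$ is a spanning tree on vertex set $P$ whose edges are weighted by the Euclidean distance between their endpoints. Its dilation is $\max\{ d_G(p,p')/|pp'| : p\neq p'\in P\}$, where $d_G$ is the shortest-path distance in the tree and $|pp'|$ the Euclidean distance. *)

From mathcomp Require Import all_boot all_order all_algebra.
From mathcomp Require Import all_classical all_reals all_analysis.
Set Implicit Arguments. Unset Strict Implicit. Unset Printing Implicit Defensive.
Import Order.TTheory GRing.Theory Num.Theory.
Local Open Scope ring_scope.
Local Open Scope classical_set_scope.

Section TreeSpanner.
Variable R : realType.

Definition edist (p q : R * R) : R :=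
  Num.sqrt ((p.1 - q.1) ^+ 2 + (p.2 - q.2) ^+ 2).

Definition circ_pts (n : nat) (a b r th : R) (k : 'I_n) : R * R :=
  (a + r * cos (th + 2 * pi * k%:R / n%:R),
   b + r * sin (th + 2 * pi * k%:R / n%:R)).

(* A spanning tree on the vertex set 'I_n : a simple undirected graph
   (symmetric, irreflexive edge relation) that is connected and has
   exactly n-1 edges (each edge counted twice as an ordered pair). *)
Definition is_spanning_tree (n : nat) (e : rel 'I_n) : Prop :=
  [/\ symmetric e, irreflexive e, (forall i j, connect e i j) &
      #|[set p : 'I_n * 'I_n | e p.1 p.2]| = (n.-1).*2].

Definition walk_len (n : nat) (f : 'I_n -> R * R) (i : 'I_n) (s : seq 'I_n) : R :=
  \sum_(d <- pairmap (fun x y => edist (f x) (f y)) i s) d.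

Definition tree_dist (n : nat) (e : rel 'I_n) (f : 'I_n -> R * R) (i j : 'I_n) : R :=
  inf [set l : R | exists s : seq 'I_n,
         [/\ path e i s, last i s = j & l = walk_len f i s]].

Definition dilation (n : nat) (e : rel 'I_n) (f : 'I_n -> R * R) : R :=
  \big[Num.max/0]_(p : 'I_n * 'I_n | p.1 != p.2)
     (tree_dist e f p.1 p.2 / edist (f p.1) (f p.2)).

End TreeSpanner.

(* Take the star centred at point 0. The chord between points p and q has length
   [2 r |sin (pi (p - q) / n)|], so with [u = pi p / 2n] and [v = pi q / 2n] the
   detour through the centre is bounded by the sum-to-product formula:
     [sin (2u) + sin (2v) = 2 sin (u + v) cos (u - v) <= 2 cos (u - v)
                          <= |sin (2 (u - v))| / sin (pi / 2n)],
   since [pi / 2n <= |u - v| < pi / 2]. Finally [1 / sin x <= 1 / x + x] for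
   [0 < x <= 1], as [sin x > x - x^3 / 6] by the alternating sine series. *)

From Pilot Require Import Defs.
From mathcomp Require Import all_boot all_order all_algebra.
From mathcomp Require Import all_classical all_reals all_analysis.
From mathcomp Require Import ring lra.
Import Order.TTheory GRing.Theory Num.Theory.
Import numFieldNormedType.Exports.
Set Implicit Arguments.
Unset Strict Implicit.
Unset Printing Implicit Defensive.
Local Open Scope ring_scope.

Lemma norm_natrB_bounds (R : numDomainType) (n p q : nat) :
  (p < n)%N -> (q < n)%N -> p != q -> 1 <= `|p%:R - q%:R : R| < n%:R.
Proof.
have bounds k l : (l < k)%N -> (k < n)%N -> 1 <= `|k%:R - l%:R : R| < n%:R.
  move=> l_lt_k k_lt_n; rewrite -natrB ?(ltnW l_lt_k) // normr_nat ler1n ltr_nat subn_gt0 l_lt_k.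
  exact: leq_ltn_trans (leq_subr l k) k_lt_n.
move=> p_lt_n q_lt_n; case: ltngtP => // [p_lt_q | q_lt_p] _.
  by rewrite distrC bounds.
exact: bounds.
Qed.

Section Trigonometry.
Variable R : realType.
Implicit Types x y u v w : R.

Lemma sin_coeff'_pair_gt0 x k : 0 < x < 2 ->
  0 < sin_coeff' x k.*2 + sin_coeff' x k.*2.+1.
Proof.
move=> /andP[x_gt0 x_lt2].
have sin_coeff'E n : sin_coeff' x n = (-1) ^+ n * (x ^+ n.*2.+1 / n.*2.+1`!%:R).
  by rewrite /sin_coeff' -exprnP mulrA.
rewrite !sin_coeff'E -signr_odd -[(-1) ^+ k.*2.+1]signr_odd /= odd_double.
rewrite expr0 expr1 mul1r mulN1r.
rewrite doubleS -(addn2 k.*2.*2.+1) exprD addn2.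
set m := k.*2.*2.+1; set a := x ^+ m / m`!%:R.
rewrite -[m.+2`!]/(m.+2 * (m.+1 * m`!))%N 2!natrM.
have a_gt0 : 0 < a by rewrite divr_gt0 ?exprn_gt0 // ltr0n fact_gt0.
have x2_lt : x ^+ 2 < m.+2%:R * m.+1%:R.
  have m1_ge2 : (2 : R) <= m.+1%:R by rewrite ler_nat.
  have m2_ge2 : (2 : R) <= m.+2%:R by rewrite ler_nat.
  nra.
have -> : x ^+ m * x ^+ 2 / (m.+2%:R * (m.+1%:R * m`!%:R))
          = a * (x ^+ 2 / (m.+2%:R * m.+1%:R)).
  rewrite /a; field.
  by rewrite !gt_eqF ?ltr0n ?fact_gt0.
by rewrite subr_gt0 -[ltRHS]mulr1 ltr_pM2l // ltr_pdivrMr ?mul1r.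
Qed.

Lemma sin_gt_cubic x : 0 < x < 2 -> x - x ^+ 3 / 6 < sin x.
Proof.
move=> x_02; have sin_series := @cvg_sin_coeff' R x.
rewrite -(cvg_lim (@Rhausdorff R) sin_series).
have -> : x - x ^+ 3 / 6 = \sum_(0 <= i < 2) sin_coeff' x i.
  rewrite big_nat_recr //= big_nat1 /sin_coeff' expr0z expr1z /=.
  by rewrite mul1r mulN1r expr1 divr1 mulNr.
apply: lt_sum_lim_series => [|d]; first by move/cvgP: sin_series.
exact: sin_coeff'_pair_gt0 d.+1 x_02.
Qed.

Lemma invr_sin_le x : 0 < x <= 1 -> (sin x)^-1 <= x^-1 + x.
Proof.
move=> /andP[x_gt0 x_le1].
have x2_le1 : x ^+ 2 <= 1 by rewrite expr_le1 // ltW.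
have cubic_lt_sin : x - x ^+ 3 / 6 < sin x by rewrite sin_gt_cubic // x_gt0; lra.
have cubic_gt0 : 0 < x - x ^+ 3 / 6 by rewrite exprS; nra.
have sin_gt0 : 0 < sin x by apply: lt_trans cubic_lt_sin.
have cubicE : (x^-1 + x) * (x - x ^+ 3 / 6) = 1 + x ^+ 2 * (5 / 6 - x ^+ 2 / 6).
  by field; rewrite gt_eqF.
rewrite -[(sin x)^-1]mul1r ler_pdivrMr //.
apply: (@le_trans _ _ ((x^-1 + x) * (x - x ^+ 3 / 6))).
  rewrite cubicE lerDl mulr_ge0 ?sqr_ge0 //; lra.
by rewrite ler_wpM2l ?ltW // addr_gt0 ?invr_gt0.
Qed.

Lemma sin_mulr2nD x y : sin (x *+ 2) + sin (y *+ 2) = 2 * sin (x + y) * cos (x - y).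
Proof.
rewrite !sin_mulr2n sinD cosB.
transitivity ((cos x * sin x) *+ 2 * (cos y ^+ 2 + sin y ^+ 2) +
              (cos y * sin y) *+ 2 * (cos x ^+ 2 + sin x ^+ 2)).
  by rewrite !cos2Dsin2 !mulr1.
by ring.
Qed.

Lemma norm_sin x : `|x| <= pi -> `|sin x| = sin `|x|.
Proof.
case: (ger0P x) => [x_ge0|x_lt0] x_le_pi.
  by rewrite ger0_norm // sin_ge0_pi // x_ge0.
by rewrite -normrN -sinN ger0_norm // sin_ge0_pi // x_le_pi oppr_ge0 ltW.
Qed.

Lemma sin_le_norm_sin x w : 0 <= x <= `|w| -> `|w| <= pi / 2 -> sin x <= `|sin w|.
Proof.
move=> /andP[x_ge0 x_le_w] w_le_pi2.
have pi_gt0 := @pi_gt0 R.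
rewrite norm_sin; last by apply: le_trans w_le_pi2 _; lra.
rewrite leNgt ltr_sin ?in_itv /= -?leNgt //; apply/andP; split; lra.
Qed.

Lemma sin_mulr2nD_le x u v : 0 < x <= `|u - v| -> `|u - v| < pi / 2 ->
  sin (u *+ 2) + sin (v *+ 2) <= (sin x)^-1 * `|sin ((u - v) *+ 2)|.
Proof.
move=> /andP[x_gt0 x_le_uv] uv_lt_pi2.
have cos_gt0 : 0 < cos (u - v).
  by apply: cos_gt0_pihalf; rewrite -ltr_norml.
have sin_x_gt0 : 0 < sin x.
  by apply: sin_gt0_pihalf; rewrite x_gt0 (le_lt_trans x_le_uv).
have sin_le : sin x <= `|sin (u - v)|.
  by apply: sin_le_norm_sin; [rewrite (ltW x_gt0) | exact: ltW].
rewrite sin_mulr2nD sin_mulr2n normrMn normrM (gtr0_norm cos_gt0).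
apply: (@le_trans _ _ (2 * cos (u - v))); first by have := sin_le1 (u + v); nra.
rewrite ler_pdivlMl // mulr2n; nra.
Qed.

Lemma sin_pi_div_add_le (n p q : nat) : (p < n)%N -> (q < n)%N -> p != q ->
  `|sin (pi * p%:R / n%:R)| + `|sin (pi * q%:R / n%:R)| <=
  (sin (pi / (2 * n%:R)))^-1 * `|sin (pi * (p%:R - q%:R) / n%:R) : R|.
Proof.
move=> p_lt_n q_lt_n p_neq_q.
have n_gt0 : (0 : R) < n%:R by rewrite ltr0n (leq_ltn_trans _ p_lt_n).
have angle_in k : (k <= n)%N -> 0 <= @pi R * k%:R / n%:R <= pi.
  move=> k_le_n; rewrite divr_ge0 ?mulr_ge0 ?pi_ge0 //= ler_pdivrMr //.
  by rewrite ler_pM2l ?pi_gt0 // ler_nat.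
rewrite (ger0_norm (sin_ge0_pi (angle_in p (ltnW p_lt_n)))).
rewrite (ger0_norm (sin_ge0_pi (angle_in q (ltnW q_lt_n)))).
have /andP[dist_ge1 dist_lt_n] := norm_natrB_bounds R p_lt_n q_lt_n p_neq_q.
set x := pi / (2 * n%:R).
have x_gt0 : 0 < x by rewrite divr_gt0 ?pi_gt0 ?mulr_gt0.
have angleE k : pi * k / n%:R = (x * k) *+ 2.
  by rewrite /x mulr2n; field; rewrite gt_eqF.
rewrite !angleE mulrBr; apply: sin_mulr2nD_le; rewrite -mulrBr normrM (gtr0_norm x_gt0).
  by rewrite x_gt0 ler_peMr // ltW.
rewrite (_ : pi / 2 = x * n%:R) ?ltr_pM2l //.
by rewrite /x; field; rewrite gt_eqF.
Qed.

End Trigonometry.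

Section Spanner.
Variables (R : realType) (n : nat).
Implicit Types (e : rel 'I_n) (f : 'I_n -> R * R).

Lemma edistxx (p : R * R) : Defs.edist p p = 0.
Proof. by rewrite /Defs.edist !subrr expr0n addr0 sqrtr0. Qed.

Lemma walk_len_ge0 f i s : 0 <= walk_len f i s.
Proof.
elim: s i => [|j s IHs] i; first by rewrite /walk_len big_nil.
by rewrite /walk_len /= big_cons addr_ge0 ?sqrtr_ge0 ?IHs.
Qed.

Lemma tree_dist_le_walk_len e f i s :
  path e i s -> tree_dist e f i (last i s) <= walk_len f i s.
Proof.
move=> e_path; apply: ge_inf; last by exists s.
by exists 0 => _ [t [_ _ ->]]; exact: walk_len_ge0.
Qed.

Lemma dilation_le e f (B : R) : 0 <= B ->
  (forall i j, i != j -> tree_dist e f i j <= B * Defs.edist (f i) (f j)) ->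
  dilation e f <= B.
Proof.
move=> B_ge0 dist_le; apply: (big_ind (fun d => d <= B)) => //.
  by move=> d d' d_le d'_le; rewrite ge_max d_le d'_le.
move=> [i j] /= i_neq_j.
have [->|dist_neq0] := eqVneq (Defs.edist (f i) (f j)) 0; first by rewrite invr0 mulr0.
by rewrite ler_pdivrMr ?lt0r ?dist_neq0 ?sqrtr_ge0 ?dist_le.
Qed.

Definition star (c : 'I_n) : rel 'I_n := fun i j => (i != j) && ((i == c) || (j == c)).

Lemma star_spanning_tree c : is_spanning_tree (star c).
Proof.
have star_sym : symmetric (star c) by move=> i j; rewrite /star eq_sym orbC.
split => //.
- by move=> i; rewrite /star eqxx.
- have to_c i : connect (star c) i c.
    have [->|i_neq_c] := eqVneq i c; first exact: connect0.
    by apply: connect1; rewrite /star i_neq_c eqxx orbT.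
  by move=> i j; apply: connect_trans (to_c i) _; rewrite (sym_connect_sym star_sym).
have -> : #|[set p : 'I_n * 'I_n | star c p.1 p.2]%classic| =
          #|finset.setX [set~ c] [set c] :|: finset.setX [set c] [set~ c]|.
  apply: eq_card => -[i j]; rewrite unfold_in /= asboolb !inE /star /=.
  have [->|i_neq_c] := eqVneq i c; first by rewrite /= andbT eq_sym.
  by have [->|] := eqVneq j c; rewrite ?i_neq_c ?andbF.
rewrite cardsU (_ : _ :&: _ = finset.set0); last first.
  by apply/setP => -[i j]; rewrite !inE; case: (i == c); case: (j == c).
by rewrite cards0 subn0 !cardsX cardsC1 cards1 card_ord muln1 mul1n addnn.
Qed.

Lemma tree_dist_star_le c f i j : i != j ->
  tree_dist (star c) f i j <= Defs.edist (f i) (f c) + Defs.edist (f c) (f j).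
Proof.
move=> i_neq_j; case: (boolP ((i == c) || (j == c))) => [ij_c | ].
  have ij_path : path (star c) i [:: j] by rewrite /= /star i_neq_j ij_c.
  apply: le_trans (tree_dist_le_walk_len f ij_path) _.
  rewrite /walk_len /= big_cons big_nil addr0.
  by case/orP: ij_c => /eqP ->; rewrite edistxx ?add0r ?addr0.
rewrite negb_or => /andP[i_neq_c j_neq_c].
have icj_path : path (star c) i [:: c; j].
  by rewrite /= /star i_neq_c eqxx orbT eq_sym j_neq_c.
apply: le_trans (tree_dist_le_walk_len f icj_path) _.
by rewrite /walk_len /= !big_cons big_nil addr0.
Qed.

End Spanner.

Lemma edist_circle (R : realType) (a b r s d : R) : 0 <= r ->
  Defs.edist (a + r * cos (s + d), b + r * sin (s + d))
             (a + r * cos (s - d), b + r * sin (s - d)) = 2 * r * `|sin d|.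
Proof.
move=> r_ge0; rewrite /Defs.edist /= cosD cosB sinD sinB.
transitivity (Num.sqrt ((2 * r * sin d) ^+ 2 * (cos s ^+ 2 + sin s ^+ 2))).
  by congr Num.sqrt; ring.
by rewrite cos2Dsin2 mulr1 sqrtr_sqr normrM (ger0_norm (x := 2 * r)) ?mulr_ge0.
Qed.

Lemma edist_circ_pts (R : realType) n (a b r th : R) (i j : 'I_n) : 0 <= r ->
  Defs.edist (circ_pts a b r th i) (circ_pts a b r th j) =
  2 * r * `|sin (pi * (i%:R - j%:R) / n%:R)|.
Proof.
move=> r_ge0.
have n_neq0 : n%:R != 0 :> R by rewrite pnatr_eq0 -lt0n (leq_ltn_trans _ (ltn_ord i)).
set s := th + pi * (i%:R + j%:R) / n%:R; set d := pi * (i%:R - j%:R) / n%:R.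
have angle_i : th + 2 * pi * i%:R / n%:R = s + d by rewrite /s /d; field.
have angle_j : th + 2 * pi * j%:R / n%:R = s - d by rewrite /s /d; field.
by rewrite /circ_pts angle_i angle_j edist_circle.
Qed.

Theorem lemma25 (R : realType) (n : nat) (a b r th : R) :
  (2 <= n)%N -> 0 < r ->
  exists e : rel 'I_n,
    is_spanning_tree e /\
    dilation e (circ_pts a b r th) <= 2 * n%:R / pi + pi / (2 * n%:R).
Proof.
case: n => [//|m] m_ge1 r_gt0; have r_ge0 := ltW r_gt0.
set x := pi / (2 * m.+1%:R).
have x_gt0 : 0 < x by rewrite divr_gt0 ?pi_gt0 ?mulr_gt0.
have x_le1 : x <= 1.
  have pi_lt4 : pi < 4 :> R by have := @pihalf_lt2 R; lra.
  have n_ge2 : (2 : R) <= m.+1%:R by rewrite ler_nat.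
  by rewrite ler_pdivrMr ?mulr_gt0 //; lra.
have inv_sin_x_le : (sin x)^-1 <= 2 * m.+1%:R / pi + pi / (2 * m.+1%:R).
  by rewrite -invf_div invr_sin_le // x_gt0.
exists (star ord0); split; first exact: star_spanning_tree.
apply: dilation_le => [|i j i_neq_j]; first by rewrite addr_ge0 ?divr_ge0 ?pi_ge0.
apply: le_trans (tree_dist_star_le _ _ i_neq_j) _.
rewrite !edist_circ_pts //= subr0 sub0r mulrN mulNr sinN normrN -mulrDr mulrCA.
rewrite ler_pM2l ?mulr_gt0 //.
apply: le_trans (sin_pi_div_add_le R (ltn_ord i) (ltn_ord j) i_neq_j) _.
by rewrite ler_wpM2r.
Qed.
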